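(* Let $\mathcal{X}$ and $\mathcal{W}$ be finite sets and $G\in\mathbb{R}^{|\mathcal{W}|\times|\mathcal{X}|}$ a matrix such that for every probability vector $q$ on $\mathcal{X}$, $\|Gq\|_1>0$ and $Gq/\|Gq\|_1$ is entrywise non-negative. Let $(\eta,F)$ be a generalised entropy. For jointly distributed random variables $X$ (values in $\mathcal{X}$, distribution $p$) and $Y$ (discrete), define $H_g(X)=\eta\big(\|Gp\|_1F(Gp/\|Gp\|_1)\big)$ and $H_g(X\mid Y)=\eta\Big(\sum_{y:\,p(y)>0}p(y)\|Gp_{X\mid y}\|_1F\big(Gp_{X\mid y}/\|Gp_{X\mid y}\|_1\big)\Big)$. Then $H_g(X)-H_g(X\mid Y)\geq 0$.
   Context: Generalised entropy: a pair $(\eta,F)$ where $F$ is a bounded real-valued function on probability vectors of every finite length that is symmetric (unchanged by permuting entries) and expansible (unchanged by appending zero entries), and $\eta$ is a real function, such that either $\eta$ is increasing and $F$ concave, or $\eta$ is decreasing and $F$ convex. $p_{X\mid y}=(p(x\mid y))_{x\in\mathcal{X}}$ is the posterior vector and $\|\cdot\|_1$ the $\ell_1$ norm. *)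

From HB Require Import structures.
From mathcomp Require Import all_boot all_order all_algebra.
From mathcomp Require Import all_classical all_reals all_analysis.
Set Implicit Arguments. Unset Strict Implicit. Unset Printing Implicit Defensive.
Import Order.TTheory GRing.Theory Num.Theory.
Import numFieldNormedType.Exports.
Local Open Scope ring_scope.

Section Defs.
Variable R : realType.

Definition is_prob (s : seq R) : Prop :=
  (forall x, x \in s -> 0 <= x) /\ \sum_(x <- s) x = 1.

Definition is_prob_vec n (q : 'cV[R]_n) : Prop :=
  (forall i, 0 <= q i 0) /\ \sum_i q i 0 = 1.

Definition l1 m (v : 'cV[R]_m) : R := \sum_i `|v i 0|.

Definition seqv m (v : 'cV[R]_m) : seq R := [seq v i 0 | i <- enum 'I_m].

Definition F_bounded (F : seq R -> R) : Prop :=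
  exists M : R, forall s, is_prob s -> `|F s| <= M.
Definition F_symmetric (F : seq R -> R) : Prop :=
  forall s t, is_prob s -> perm_eq s t -> F s = F t.
Definition F_expansible (F : seq R -> R) : Prop :=
  forall s, is_prob s -> F (rcons s 0) = F s.
Definition mix (a : R) (s t : seq R) : seq R :=
  [seq a * xy.1 + (1 - a) * xy.2 | xy <- zip s t].
Definition F_concave (F : seq R -> R) : Prop :=
  forall s t a, size s = size t -> is_prob s -> is_prob t -> 0 <= a <= 1 ->
    a * F s + (1 - a) * F t <= F (mix a s t).
Definition F_convex (F : seq R -> R) : Prop :=
  forall s t a, size s = size t -> is_prob s -> is_prob t -> 0 <= a <= 1 ->
    F (mix a s t) <= a * F s + (1 - a) * F t.

Definition gen_entropy (eta : R -> R) (F : seq R -> R) : Prop :=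
  [/\ F_bounded F, F_symmetric F, F_expansible F &
      ({homo eta : x y / x <= y} /\ F_concave F) \/
      ({homo eta : x y / y <= x >-> x <= y} /\ F_convex F)].

Definition gterm m n (G : 'M[R]_(m, n)) (F : seq R -> R) (q : 'cV[R]_n) : R :=
  l1 (G *m q) * F (seqv ((l1 (G *m q))^-1 *: (G *m q))).

(* joint pmf p x y of (X, Y), X in 'I_n, Y in nat (any discrete Y) *)
Definition margY n (p : 'I_n -> nat -> R) (y : nat) : R := \sum_x p x y.
Definition margX n (p : 'I_n -> nat -> R) : 'cV[R]_n :=
  \col_x (limn (series (p x))).
Definition condX n (p : 'I_n -> nat -> R) (y : nat) : 'cV[R]_n :=
  \col_x (p x y / margY p y).

Definition Hg m n (eta : R -> R) (F : seq R -> R) (G : 'M[R]_(m, n))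
  (p : 'I_n -> nat -> R) : R := eta (gterm G F (margX p)).

Definition Hg_cond m n (eta : R -> R) (F : seq R -> R) (G : 'M[R]_(m, n))
  (p : 'I_n -> nat -> R) : R :=
  eta (limn (series (fun y =>
         if 0 < margY p y then margY p y * gterm G F (condX p y) else 0))).

End Defs.

From HB Require Import structures.
From mathcomp Require Import all_boot all_order all_algebra.
From mathcomp Require Import all_classical all_reals all_analysis.
From mathcomp Require Import ring lra.
Import Order.TTheory GRing.Theory Num.Theory.
Import numFieldNormedType.Exports.
Local Open Scope classical_set_scope.
Local Open Scope ring_scope.
Set Implicit Arguments. Unset Strict Implicit. Unset Printing Implicit Defensive.

(* For nonnegative u, the map u |-> ||G u||_1 F(G u / ||G u||_1) is the
   perspective of F composed with the linear map G: it is positively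
   homogeneous, superadditive when F is concave, and bounded by a multiple of
   ||u||_1 because F is bounded.  By homogeneity the y-th term of the
   conditional sum is this map at the column p(., y), and these columns add
   up to the marginal p_X; superadditivity bounds every partial sum plus the
   tail by the value at p_X, and the linear bound makes the tail vanish in the
   limit.  Monotonicity of eta concludes; the convex case is the concave one
   applied to -F. *)

Definition nonneg_cv (R : realType) n (u : 'cV[R]_n) : Prop :=
  forall i, 0 <= u i 0.

Section l1_norm.
Variables (R : realType) (n : nat).
Implicit Types (u v : 'cV[R]_n) (c : R).

Lemma l10 : l1 (0 : 'cV[R]_n) = 0.
Proof. by rewrite /l1 big1 // => i _; rewrite mxE normr0. Qed.

Lemma l1_eq0 u : l1 u = 0 -> u = 0.
Proof.
move=> /psumr_eq0P u0; apply/matrixP => i j; rewrite (ord1 j) mxE.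
by apply/normr0_eq0/u0.
Qed.

Lemma l1Z c u : l1 (c *: u) = `|c| * l1 u.
Proof. by rewrite /l1 mulr_sumr; apply: eq_bigr => i _; rewrite mxE normrM. Qed.

Lemma l1_nonneg u : nonneg_cv u -> l1 u = \sum_i u i 0.
Proof. by move=> u_ge0; apply: eq_bigr => i _; rewrite ger0_norm. Qed.

Lemma nonneg_cvD u v : nonneg_cv u -> nonneg_cv v -> nonneg_cv (u + v).
Proof. by move=> u_ge0 v_ge0 i; rewrite mxE; apply: addr_ge0. Qed.

Lemma nonneg_cvZ c u : 0 <= c -> nonneg_cv u -> nonneg_cv (c *: u).
Proof. by move=> c_ge0 u_ge0 i; rewrite mxE; apply: mulr_ge0. Qed.

Lemma nonneg_cv_sum I (r : seq I) (P : I -> 'cV[R]_n) :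
  (forall i, nonneg_cv (P i)) -> nonneg_cv (\sum_(i <- r) P i).
Proof.
by move=> P_ge0 j; rewrite summxE; apply: sumr_ge0 => i _; apply: P_ge0.
Qed.

Lemma l1D_nonneg u v : nonneg_cv u -> nonneg_cv v -> l1 (u + v) = l1 u + l1 v.
Proof.
move=> u_ge0 v_ge0; rewrite l1_nonneg; last exact: nonneg_cvD.
rewrite (l1_nonneg u_ge0) (l1_nonneg v_ge0) -big_split.
by apply: eq_bigr => i _; rewrite mxE.
Qed.

Lemma l1_sum_nonneg I (r : seq I) (P : I -> 'cV[R]_n) :
  (forall i, nonneg_cv (P i)) ->
  l1 (\sum_(i <- r) P i) = \sum_(i <- r) l1 (P i).
Proof.
move=> P_ge0; elim: r => [|i r IHr]; first by rewrite !big_nil l10.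
by rewrite !big_cons l1D_nonneg ?IHr //; apply: nonneg_cv_sum.
Qed.

Lemma l1_mulmx_le m (A : 'M[R]_(m, n)) u :
  l1 (A *m u) <= (\sum_i \sum_j `|A i j|) * l1 u.
Proof.
rewrite /l1 mulr_suml; apply: ler_sum => i _; rewrite mxE mulr_suml.
apply: le_trans (ler_norm_sum _ _ _) _; apply: ler_sum => j _.
rewrite normrM ler_wpM2l // (bigD1 j) //= lerDl.
by apply: sumr_ge0 => k _.
Qed.

End l1_norm.

Lemma is_prob_normalized (R : realType) n (v : 'cV[R]_n) :
  0 < l1 v -> nonneg_cv v -> is_prob (seqv ((l1 v)^-1 *: v)).
Proof.
move=> l1v_gt0 v_ge0; split.
  by move=> x /mapP [i _ ->]; apply: nonneg_cvZ; rewrite // invr_ge0 ltW.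
rewrite /seqv big_map big_enum /=; under eq_bigr do rewrite mxE.
by rewrite -mulr_sumr -l1_nonneg // mulVf ?gt_eqF.
Qed.

Definition nonneg_on_prob (R : realType) m n (G : 'M[R]_(m, n)) : Prop :=
  forall q : 'cV[R]_n, is_prob_vec q ->
    0 < l1 (G *m q) /\ (forall i, 0 <= (G *m q) i 0 / l1 (G *m q)).

Section gterm.
Variables (R : realType) (m n : nat) (G : 'M[R]_(m, n)) (F : seq R -> R).
Implicit Types (u v : 'cV[R]_n).

Lemma gterm0 : gterm G F 0 = 0.
Proof. by rewrite /gterm mulmx0 l10 mul0r. Qed.

Lemma gtermZ c u : 0 < c -> gterm G F (c *: u) = c * gterm G F u.
Proof.
move=> c_gt0; rewrite /gterm -scalemxAr l1Z gtr0_norm // scalerA invfM.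
by rewrite [_ * _ * c]mulrAC mulVf ?gt_eqF // mul1r mulrA.
Qed.

Lemma gtermNF u : gterm G (fun s => - F s) u = - gterm G F u.
Proof. exact: mulrN. Qed.

Hypothesis G_prob : nonneg_on_prob G.

Lemma mulmx_nonneg_cv u : nonneg_cv u -> u != 0 ->
  0 < l1 (G *m u) /\ nonneg_cv (G *m u).
Proof.
move=> u_ge0 u_neq0.
have l1u_gt0 : 0 < l1 u.
  rewrite lt_def sumr_ge0 // andbT.
  by apply: contra u_neq0 => /eqP/l1_eq0 ->.
pose q := (l1 u)^-1 *: u.
have q_prob : is_prob_vec q.
  split; first by apply: nonneg_cvZ; rewrite // invr_ge0 ltW.
  under eq_bigr do rewrite mxE.
  by rewrite -mulr_sumr -l1_nonneg // mulVf ?gt_eqF.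
have -> : G *m u = l1 u *: (G *m q).
  by rewrite -scalemxAr scalerA mulfV ?gt_eqF // scale1r.
have [l1Gq_gt0 Gq_ge0] := G_prob q_prob.
split; first by rewrite l1Z gtr0_norm // mulr_gt0.
apply: nonneg_cvZ; first exact: ltW.
move=> i; rewrite -(divfK (lt0r_neq0 l1Gq_gt0) ((G *m q) i 0)).
by apply: mulr_ge0; [exact: Gq_ge0 | exact: ltW].
Qed.

Lemma gterm_superadditive :
  F_concave F -> forall u v, nonneg_cv u -> nonneg_cv v ->
  gterm G F u + gterm G F v <= gterm G F (u + v).
Proof.
move=> F_ccv u v u_ge0 v_ge0.
have [->|u_neq0] := eqVneq u 0; first by rewrite gterm0 !add0r.
have [->|v_neq0] := eqVneq v 0; first by rewrite gterm0 !addr0.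
have [a_gt0 a_ge0] := mulmx_nonneg_cv u_ge0 u_neq0.
have [b_gt0 b_ge0] := mulmx_nonneg_cv v_ge0 v_neq0.
rewrite /gterm mulmxDr l1D_nonneg //.
move: a_gt0 a_ge0 b_gt0 b_ge0; set a := G *m u; set b := G *m v.
set La := l1 a; set Lb := l1 b => a_gt0 a_ge0 b_gt0 b_ge0.
have Lab_gt0 : 0 < La + Lb by rewrite addr_gt0.
(* the weight for which mixing the normalised Gu and Gv gives the normalised
   G(u + v) *)
set t := La / (La + Lb).
have t01 : 0 <= t <= 1.
  rewrite /t divr_ge0 ?(ltW a_gt0) ?(ltW Lab_gt0) //=.
  by rewrite ler_pdivrMr // mul1r lerDl ltW.
have := F_ccv _ _ t (etrans (size_map _ _) (esym (size_map _ _)))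
  (is_prob_normalized a_gt0 a_ge0) (is_prob_normalized b_gt0 b_ge0) t01.
have -> : mix t (seqv (La^-1 *: a)) (seqv (Lb^-1 *: b)) =
          seqv ((La + Lb)^-1 *: (a + b)).
  rewrite /mix /seqv zip_map -map_comp; apply: eq_map => i /=.
  by rewrite !mxE /t; field; rewrite !gt_eqF.
set Fa := F (seqv (La^-1 *: a)); set Fb := F (seqv (Lb^-1 *: b)).
have -> : La * Fa + Lb * Fb = (La + Lb) * (t * Fa + (1 - t) * Fb).
  by rewrite /t; field; rewrite gt_eqF.
by rewrite ler_pM2l.
Qed.

Lemma gterm_le_l1 M : (forall s, is_prob s -> `|F s| <= M) ->
  forall u, nonneg_cv u ->
  `|gterm G F u| <= M * (\sum_i \sum_j `|G i j|) * l1 u.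
Proof.
move=> F_le u u_ge0.
have [->|u_neq0] := eqVneq u 0; first by rewrite gterm0 l10 normr0 mulr0.
have [Gu_gt0 Gu_ge0] := mulmx_nonneg_cv u_ge0 u_neq0.
have F_le_M := F_le _ (is_prob_normalized Gu_gt0 Gu_ge0).
have M_ge0 : 0 <= M := le_trans (normr_ge0 _) F_le_M.
rewrite /gterm normrM gtr0_norm // mulrC -mulrA.
by apply: ler_pM => //; [exact: ltW | exact: l1_mulmx_le].
Qed.

End gterm.

Section superadditive_series.
Variables (R : realType) (n : nat) (phi : 'cV[R]_n -> R) (K : R).
Hypothesis phi_superadditive : forall u v, nonneg_cv u -> nonneg_cv v ->
  phi u + phi v <= phi (u + v).
Hypothesis phi_le_l1 : forall u, nonneg_cv u -> `|phi u| <= K * l1 u.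

Lemma sum_le_superadditive I (r : seq I) (P : I -> 'cV[R]_n) :
  (forall i, nonneg_cv (P i)) ->
  \sum_(i <- r) phi (P i) <= phi (\sum_(i <- r) P i).
Proof.
move=> P_ge0; elim: r => [|i r IHr].
  have : `|phi 0| <= K * l1 (0 : 'cV[R]_n).
    by apply: phi_le_l1 => i; rewrite mxE.
  by rewrite !big_nil l10 mulr0 normr_le0 => /eqP ->.
rewrite !big_cons; apply: le_trans (phi_superadditive _ _) => //.
  by rewrite lerD2l.
exact: nonneg_cv_sum.
Qed.

Variables (P : nat -> 'cV[R]_n) (S : 'cV[R]_n).
Hypothesis P_ge0 : forall y, nonneg_cv (P y).
Hypothesis cvg_P : forall i, series (fun y => P y i 0) @ \oo --> S i 0.

Let partial N := \sum_(0 <= y < N) P y.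
Let tail N := S - partial N.

Let partialE N i : partial N i 0 = series (fun y => P y i 0) N.
Proof. by rewrite summxE. Qed.

Let partial_nonneg N : nonneg_cv (partial N).
Proof. exact: nonneg_cv_sum. Qed.

Lemma tail_nonneg N : nonneg_cv (tail N).
Proof.
move=> i; rewrite !mxE partialE subr_ge0 -(cvg_lim _ (@cvg_P i)) //.
apply: nondecreasing_cvgn_le; last exact: cvgP (@cvg_P i).
by apply: nondecreasing_series => y _ _; apply: P_ge0.
Qed.

Lemma cvg_series_l1 : series (fun y => l1 (P y)) @ \oo --> l1 S.
Proof.
have S_ge0 : nonneg_cv S.
  by have := tail_nonneg 0; rewrite /tail /partial big_geq // subr0.
rewrite l1_nonneg //.
have -> : series (fun y => l1 (P y)) =
          fun N => \sum_i series (fun y => P y i 0) N.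
  apply/funext => N; rewrite /series /= -l1_sum_nonneg // l1_nonneg.
    by apply: eq_bigr => i _; rewrite summxE.
  exact: nonneg_cv_sum.
apply: cvg_big => [|i _]; [exact: add_continuous | exact: cvg_P].
Qed.

Lemma cvg_l1_tail : l1 (tail N) @[N --> \oo] --> 0.
Proof.
have l1_tail N : l1 (tail N) = l1 S - series (fun y => l1 (P y)) N.
  rewrite -{1}(subrKC (partial N) S).
  rewrite (l1D_nonneg (partial_nonneg N) (tail_nonneg N)).
  by rewrite /series /= -l1_sum_nonneg // addrAC subrr add0r.
under eq_cvg do rewrite l1_tail.
suff : l1 S - series (fun y => l1 (P y)) N @[N --> \oo] --> l1 S - l1 S.
  by rewrite subrr.
by apply: cvgB; [exact: cvg_cst | exact: cvg_series_l1].
Qed.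

Lemma is_cvg_series_le_l1 : cvgn (series (phi \o P)).
Proof.
have phi_le N : `|phi (P N)| <= K * l1 (P N) by apply: phi_le_l1.
apply/normed_cvg/(@series_le_cvg _ _ (K *: (fun y => l1 (P y)))).
- by move=> N; apply: normr_ge0.
- by move=> N; apply: le_trans (normr_ge0 _) (phi_le N).
- exact: phi_le.
- exact: is_cvg_seriesZ (cvgP _ cvg_series_l1).
Qed.

Lemma lim_series_superadditive_le : limn (series (phi \o P)) <= phi S.
Proof.
have le_N N : series (phi \o P) N <= phi S + K * l1 (tail N).
  have tail_ge := phi_le_l1 (tail_nonneg N); rewrite ler_norml in tail_ge.
  have := phi_superadditive (partial_nonneg N) (tail_nonneg N).
  rewrite /tail subrKC.
  have : series (phi \o P) N <= phi (partial N) by exact: sum_le_superadditive.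
  move: tail_ge => /andP[]; lra.
have := ler_cvg_to is_cvg_series_le_l1
  (cvgD (cvg_cst (phi S)) (cvgMl_tmp (a := K) cvg_l1_tail)).
by rewrite mulr0 addr0; apply; apply: nearW.
Qed.

End superadditive_series.

Lemma F_boundedN (R : realType) (F : seq R -> R) :
  F_bounded F -> F_bounded (fun s => - F s).
Proof. by move=> [M F_le]; exists M => s s_prob; rewrite normrN F_le. Qed.

Lemma F_concaveN (R : realType) (F : seq R -> R) :
  F_convex F -> F_concave (fun s => - F s).
Proof.
move=> F_cvx s t a st s_prob t_prob a01.
by rewrite !mulrN -opprD lerN2; apply: F_cvx.
Qed.

Definition cond_gterm (R : realType) m n (G : 'M[R]_(m, n)) (F : seq R -> R)
    (p : 'I_n -> nat -> R) (y : nat) : R :=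
  if 0 < margY p y then margY p y * gterm G F (condX p y) else 0.

Section joint_pmf.
Variables (R : realType) (m n : nat) (G : 'M[R]_(m, n)) (p : 'I_n -> nat -> R).

Lemma cond_gtermNF F : cond_gterm G (fun s => - F s) p = - cond_gterm G F p.
Proof.
apply/funext => y; rewrite -[RHS]/(- cond_gterm G F p y) /cond_gterm gtermNF.
by case: ifP => _; rewrite ?mulrN ?oppr0.
Qed.

Hypothesis p_ge0 : forall x y, 0 <= p x y.

Lemma margY_ge0 y : 0 <= margY p y.
Proof. by apply: sumr_ge0 => x _. Qed.

Lemma cond_gtermE F y : cond_gterm G F p y = gterm G F (\col_x p x y).
Proof.
rewrite /cond_gterm; case: ifPn => [margY_gt0 | margY_le0].
  have -> : \col_x p x y = margY p y *: condX p y.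
    by apply/matrixP => i j; rewrite (ord1 j) !mxE mulrC divfK // gt_eqF.
  by rewrite gtermZ.
have /psumr_eq0P p_y0 : margY p y = 0.
  by apply/eqP; rewrite eq_le leNgt margY_le0 margY_ge0.
have -> : \col_x p x y = 0.
  by apply/matrixP => i j; rewrite !mxE p_y0.
by rewrite gterm0.
Qed.

Hypothesis cvg_margY : cvgn (series (margY p)).

Lemma cvg_series_margX x : series (p x) @ \oo --> margX p x 0.
Proof.
rewrite mxE; apply: (series_le_cvg (p_ge0 x) margY_ge0 _ cvg_margY) => y.
by rewrite /margY (bigD1 x) //= lerDl; apply: sumr_ge0 => z _.
Qed.

Lemma lim_cond_gterm_le F :
  nonneg_on_prob G -> F_bounded F -> F_concave F ->
  cvgn (series (cond_gterm G F p)) /\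
  limn (series (cond_gterm G F p)) <= gterm G F (margX p).
Proof.
move=> G_prob [M F_le] F_ccv.
have -> : cond_gterm G F p = gterm G F \o (fun y => \col_x p x y).
  by apply/funext => y; apply: cond_gtermE.
have P_ge0 y : nonneg_cv (\col_x p x y) by move=> x; rewrite mxE.
have cvg_P x : series (fun y => (\col_x p x y) x 0) @ \oo --> margX p x 0.
  by under eq_fun do rewrite mxE; apply: cvg_series_margX.
have gterm_sup := gterm_superadditive G_prob F_ccv.
have gterm_le := gterm_le_l1 G_prob F_le.
split; first exact (is_cvg_series_le_l1 gterm_le P_ge0 cvg_P).
exact (lim_series_superadditive_le gterm_sup gterm_le P_ge0 cvg_P).
Qed.

End joint_pmf.

Unset Implicit Arguments.

Theorem proposition3 (R : realType) (m n : nat) (G : 'M[R]_(m, n))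
  (eta : R -> R) (F : seq R -> R) (p : 'I_n -> nat -> R) :
  (forall q : 'cV[R]_n, is_prob_vec q ->
     0 < l1 (G *m q) /\ (forall i, 0 <= (G *m q) i 0 / l1 (G *m q))) ->
  gen_entropy eta F ->
  (forall x y, 0 <= p x y) ->
  series (margY p) @ \oo --> (1 : R) ->
  0 <= Hg eta F G p - Hg_cond eta F G p.
Proof.
move=> G_prob [F_bdd _ _ eta_F] p_ge0 cvg_margY; rewrite subr_ge0.
have cvg_lim_le := lim_cond_gterm_le p_ge0 (cvgP _ cvg_margY) G_prob.
case: eta_F => [[eta_incr F_ccv] | [eta_decr F_cvx]].
  by apply: eta_incr; have [] := cvg_lim_le _ F_bdd F_ccv.
have [cvg_N lim_N_le] := cvg_lim_le _ (F_boundedN F_bdd) (F_concaveN F_cvx).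
rewrite cond_gtermNF seriesN is_cvgNE in cvg_N.
rewrite cond_gtermNF seriesN limN // gtermNF lerN2 in lim_N_le.
exact: eta_decr.
Qed.
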